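(* Let $N\ge 2$, let $s_1(0),\dots,s_N(0)\in\mathbb R$, and let $s^*$ lie in the convex hull of $\{s_1(0),\dots,s_N(0)\}$. Then there exist weights $a_{ij}\ge 0$ ($1\le i\ne j\le N$) such that the solution of $s_i'=\sum_{j\ne i}a_{ij}(s_j-s_i)$, $i=1,\dots,N$, with these initial opinions satisfies $\lim_{t\to\infty}\mathbf s(t)=s^*(1,\dots,1)^T$. *)

From HB Require Import structures.
From mathcomp Require Import all_boot all_order all_algebra.
From mathcomp Require Import all_classical all_reals all_analysis.
Set Implicit Arguments. Unset Strict Implicit. Unset Printing Implicit Defensive.
Import Order.TTheory GRing.Theory Num.Theory.
Import numFieldNormedType.Exports.
Local Open Scope ring_scope.
Local Open Scope classical_set_scope.

Definition in_convex_hull (R : realType) (N : nat) (s0 : 'I_N -> R) (x : R) : Prop :=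
  exists lam : 'I_N -> R, (forall i, 0 <= lam i) /\ \sum_(i < N) lam i = 1 /\
    x = \sum_(i < N) lam i * s0 i.

Definition is_consensus_solution (R : realType) (N : nat)
  (a : 'I_N -> 'I_N -> R) (s0 : 'I_N -> R) (s : R -> 'I_N -> R) : Prop :=
  s 0 = s0 /\
  forall (t : R), 0 <= t -> forall i : 'I_N,
    is_derive t 1 (fun u => s u i) (\sum_(j < N | j != i) a i j * (s t j - s t i)).

From HB Require Import structures.
From mathcomp Require Import all_boot all_order all_algebra.
From mathcomp Require Import all_classical all_reals all_analysis.
Import Order.TTheory GRing.Theory Num.Theory.
Import numFieldNormedType.Exports.
Local Open Scope ring_scope.
Local Open Scope classical_set_scope.

(* Take a_ij := lam_j, where lam are convex weights with s* = sum_j lam_j s_j(0).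
   Then s_i' = m - s_i with m := sum_j lam_j s_j, so m' = m - m = 0 and m stays
   equal to s*; each opinion then relaxes exponentially towards s*:
   s_i(t) = s* + [s_i(0) - s*] e^-t. *)

Section Relaxation.
Context {R : realType}.

Lemma is_derive_expRN (t : R) : is_derive t 1 (fun u => expR (- u)) (- expR (- t)).
Proof.
have := is_derive1_comp (is_derive_expR (- t)) (is_deriveNid t 1).
by rewrite mulrN1.
Qed.

Lemma is_derive0_cst_ge0 (f : R -> R) :
  (forall t : R, 0 <= t -> is_derive t 1 f 0) -> forall t : R, 0 <= t -> f t = f 0.
Proof.
move=> df t; rewrite le0r => /orP[/eqP -> //|t_gt0].
have [||c _] := @MVT R f (fun=> 0) 0 t t_gt0.
- by move=> x; rewrite in_itv /= => /andP[x_gt0 _]; exact/df/ltW.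
- apply: derivable_within_continuous => x; rewrite in_itv /= => /andP[x_ge0 _].
  by case: (df x x_ge0).
- by move/eqP; rewrite mul0r subr_eq0 => /eqP.
Qed.

Lemma is_derive_relaxation (c d t : R) :
  is_derive t 1 (fun u => c + d * expR (- u)) (- (d * expR (- t))).
Proof.
have := is_deriveD (is_derive_cst c t 1) (is_deriveZ d (is_derive_expRN t)).
by rewrite add0r -mulrN.
Qed.

Lemma relaxation_unique (c : R) (f : R -> R) :
  (forall t : R, 0 <= t -> is_derive t 1 f (c - f t)) ->
  forall t : R, 0 <= t -> f t = c + (f 0 - c) * expR (- t).
Proof.
move=> df t t_ge0.
have conserved : expR t * (f t - c) = f 0 - c.
  rewrite -[RHS]mul1r -expR0.
  apply: (@is_derive0_cst_ge0 (fun u => expR u * (f u - c))) => // u u_ge0.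
  have := is_deriveM (is_derive_expR u) (is_deriveB (df u u_ge0) (is_derive_cst c u 1)).
  by rewrite subr0 /GRing.scale /= [expR u * _]mulrC -mulrDl addrA subrK subrr mul0r.
by rewrite -conserved mulrAC expRN mulfV ?expR_eq0 // mul1r addrC subrK.
Qed.

Lemma cvg_relaxation (c d : R) : (fun t => c + d * expR (- t)) @ +oo --> c.
Proof.
rewrite -[X in _ --> X]addr0 -(mulr0 d).
by apply: cvgD; [exact: cvg_cst | exact: cvgMl_tmp (@cvgr_expR R)].
Qed.

End Relaxation.

Section MeanFieldConsensus.
Context {R : realType} {N : nat} (lam : 'I_N -> R).
Hypothesis lam1 : \sum_i lam i = 1.

Definition wmean (x : 'I_N -> R) : R := \sum_i lam i * x i.

Lemma wmeanB (x y : 'I_N -> R) : wmean (fun j => x j - y j) = wmean x - wmean y.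
Proof. by rewrite /wmean -sumrB; apply: eq_bigr => j _; rewrite mulrBr. Qed.

Lemma wmean_cst (c : R) : wmean (fun=> c) = c.
Proof. by rewrite /wmean -mulr_suml lam1 mul1r. Qed.

Lemma sum_weighted_dev (x : 'I_N -> R) (i : 'I_N) :
  \sum_(j < N | j != i) lam j * (x j - x i) = wmean x - x i.
Proof.
by rewrite -[in RHS](wmean_cst (x i)) -wmeanB [RHS](bigD1 i) //= subrr mulr0 add0r.
Qed.

Lemma is_derive_wmean {s : R -> 'I_N -> R} {ds : 'I_N -> R} {t : R} :
  (forall j, is_derive t 1 (s^~ j) (ds j)) ->
  is_derive t 1 (fun u => wmean (s u)) (wmean ds).
Proof.
move=> ds_j.
have -> : (fun u => wmean (s u)) = \sum_(j < N) (fun u => lam j * s u j).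
  by apply/funext => u; rewrite fct_sumE.
exact: is_derive_sum (fun j => is_deriveZ (lam j) (ds_j j)).
Qed.

Lemma mean_field_solutionP (s0 : 'I_N -> R) (s : R -> 'I_N -> R) :
  is_consensus_solution (fun=> lam) s0 s <->
  s 0 = s0 /\
  forall t : R, 0 <= t -> forall i, is_derive t 1 (s^~ i) (wmean (s t) - s t i).
Proof.
split=> -[s00 ds]; split=> // t t_ge0 i.
  by rewrite -sum_weighted_dev; exact: ds.
by rewrite sum_weighted_dev; exact: ds.
Qed.

Definition relaxation_profile (s0 : 'I_N -> R) (t : R) (i : 'I_N) : R :=
  wmean s0 + (s0 i - wmean s0) * expR (- t).

Lemma relaxation_profile_solution (s0 : 'I_N -> R) :
  is_consensus_solution (fun=> lam) s0 (relaxation_profile s0).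
Proof.
apply/mean_field_solutionP; split.
  by apply/funext => i; rewrite /relaxation_profile oppr0 expR0 mulr1 addrC subrK.
move=> t _ i.
have wmean_profile : wmean (relaxation_profile s0 t) = wmean s0.
  rewrite /wmean /relaxation_profile; under eq_bigr do rewrite mulrDr mulrA.
  rewrite big_split /= -!mulr_suml lam1 mul1r -/(wmean _).
  by rewrite (wmeanB s0 (fun=> wmean s0)) wmean_cst subrr mul0r addr0.
rewrite wmean_profile /relaxation_profile opprD addrA subrr add0r.
exact: is_derive_relaxation.
Qed.

Lemma wmean_solution_cst {s0 : 'I_N -> R} {s : R -> 'I_N -> R} :
  is_consensus_solution (fun=> lam) s0 s -> forall t : R, 0 <= t -> wmean (s t) = wmean s0.
Proof.
move=> /mean_field_solutionP[s00 ds] t t_ge0; rewrite -s00.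
apply: (@is_derive0_cst_ge0 _ (fun u => wmean (s u))) => // u u_ge0.
by have := is_derive_wmean (ds u u_ge0); rewrite wmeanB wmean_cst subrr.
Qed.

Lemma solution_relaxation_profile {s0 : 'I_N -> R} {s : R -> 'I_N -> R} :
  is_consensus_solution (fun=> lam) s0 s ->
  forall t : R, 0 <= t -> s t = relaxation_profile s0 t.
Proof.
move=> sol t t_ge0; have /mean_field_solutionP[s00 ds] := sol; apply/funext => i.
rewrite /relaxation_profile; have -> : s0 i = s 0 i by rewrite s00.
apply: (@relaxation_unique _ _ (s^~ i)) => // u u_ge0.
by rewrite -(wmean_solution_cst sol u u_ge0); exact/ds.
Qed.

Lemma solution_cvg_wmean {s0 : 'I_N -> R} {s : R -> 'I_N -> R} (i : 'I_N) :
  is_consensus_solution (fun=> lam) s0 s -> (fun t => s t i) @ +oo --> wmean s0.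
Proof.
move=> sol; apply: cvg_trans (cvg_relaxation (wmean s0) (s0 i - wmean s0)).
apply: near_eq_cvg; apply: filterS (@nbhs_pinfty_ge R 0 _) => // t t_ge0 /=.
by rewrite (solution_relaxation_profile sol t t_ge0).
Qed.

End MeanFieldConsensus.

Theorem mainTheorem9 (R : realType) (N : nat) (s0 : 'I_N -> R) (sstar : R) :
  (2 <= N)%N -> in_convex_hull s0 sstar ->
  exists a : 'I_N -> 'I_N -> R,
    (forall i j : 'I_N, i != j -> 0 <= a i j) /\
    (exists s : R -> 'I_N -> R, is_consensus_solution a s0 s) /\
    (forall s : R -> 'I_N -> R, is_consensus_solution a s0 s ->
       forall i : 'I_N, (fun t => s t i) @ +oo --> sstar).
Proof.
move=> _ [lam [lam_ge0 [lam1 ->]]].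
exists (fun=> lam); split=> [i j _|]; first exact: lam_ge0.
split; first by exists (relaxation_profile lam s0); exact: relaxation_profile_solution.
move=> s sol i; exact (solution_cvg_wmean lam lam1 i sol).
Qed.
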